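(* Let $G$ be a finite, simple, connected graph of order at least three. If $\{u,v\}$ is a weak total metric basis of $G$ (i.e. a WTR-set of minimum cardinality, and this cardinality is $2$), then $u$ and $v$ are not adjacent.
   Context: $d(x,y)$ is the shortest-path distance. A set $W\subseteq V(G)$ is a resolving set if for every two distinct vertices $y,z$ of $G$ there is $x\in W$ with $d(y,x)\ne d(z,x)$. A set $W$ is a weak total resolving set (WTR-set) if $W$ is a resolving set and, for every $w\in W$ and every $x\in V(G)\setminus W$, there is $w'\in W\setminus\{w\}$ with $d(x,w')\ne d(w,w')$. A weak total metric basis is a WTR-set of minimum cardinality; this minimum is $\dim_{wt}(G)$. *)

From mathcomp Require Import all_boot.
Set Implicit Arguments. Unset Strict Implicit. Unset Printing Implicit Defensive.

Definition simple_graph (T : finType) (e : rel T) : Prop :=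
  symmetric e /\ irreflexive e.

Definition connected_graph (T : finType) (e : rel T) : Prop :=
  forall x y : T, connect e x y.

Fixpoint within (T : finType) (e : rel T) (n : nat) (x y : T) : bool :=
  if n is n'.+1 then (x == y) || [exists z, e x z && within e n' z y]
  else x == y.

(* shortest-path distance: the least n with a walk of length <= n from x to y.
   For a connected graph this is < #|T|, so searching 0..#|T|-1 suffices. *)
Definition dist (T : finType) (e : rel T) (x y : T) : nat :=
  find (fun n => within e n x y) (iota 0 #|T|).

Definition resolving (T : finType) (e : rel T) (W : {set T}) : Prop :=
  forall y z : T, y != z -> exists2 x, x \in W & dist e y x != dist e z x.

Definition wtr_set (T : finType) (e : rel T) (W : {set T}) : Prop :=
  resolving e W /\
  forall w x, w \in W -> x \notin W ->
    exists2 w', w' \in W :\ w & dist e x w' != dist e w w'.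

Definition wt_metric_basis (T : finType) (e : rel T) (W : {set T}) : Prop :=
  wtr_set e W /\ forall W' : {set T}, wtr_set e W' -> #|W| <= #|W'|.

From mathcomp Require Import all_boot.
Set Implicit Arguments. Unset Strict Implicit. Unset Printing Implicit Defensive.

(* If u ~ v, some vertex y outside {u, v} is adjacent to one of them, say u
   (the graph is connected and has a third vertex).  Then y and v are both at
   distance 1 from u, so u is the only candidate to distinguish y from v and
   it fails: {u, v} is not even a WTR-set. *)

Lemma dist_adj (T : finType) (e : rel T) (a b : T) :
  a != b -> e a b -> dist e a b = 1.
Proof.
move=> nab eab; have : 1 < #|T| by apply/card_gt1P; exists a, b.
rewrite /dist; case: #|T| => [|[|n]] //= _.
suff -> : [exists z, e a z && (z == b)] by rewrite (negbTE nab).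
by apply/existsP; exists b; rewrite eab eqxx.
Qed.

Lemma connect_boundary_edge (T : finType) (e : rel T) (A : {pred T}) x z :
  connect e x z -> x \notin A -> z \in A ->
  exists y t, [/\ y \notin A, t \in A & e y t].
Proof.
case/connectP=> p + -> {z}; elim: p x => [|a p IH] x /=; first by move=> _ /negP.
case/andP=> exa pa xA; case: (boolP (a \in A)) => aA; first by exists x, a.
exact: IH.
Qed.

Lemma exists_notin_set2 (T : finType) (u v : T) :
  2 < #|T| -> exists x, x \notin [set u; v].
Proof.
move=> T3; apply/existsP; rewrite -negb_forall; apply: contraTN T3 => /forallP W.
rewrite -leqNgt -cardsT.
have sub : [set: T] \subset [set u; v] by apply/subsetP=> x _; exact: W.
apply: leq_trans (subset_leq_card sub) _.
by rewrite cards2; case: (u != v).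
Qed.

Lemma wtr_set2_adj_no_neighbour (T : finType) (e : rel T) (u v y : T) :
  symmetric e -> wtr_set e [set u; v] -> u != v -> e u v ->
  y \notin [set u; v] -> ~~ e y u.
Proof.
move=> sym [_ wtr] nuv euv yW; apply/negP=> eyu.
have vW : v \in [set u; v] by rewrite !inE eqxx orbT.
have [w'] := wtr v y vW yW.
rewrite !inE => /andP[w'v /orP[/eqP-> | /eqP w'E]]; last by rewrite w'E eqxx in w'v.
have yu : y != u by apply: contraNneq yW => ->; rewrite !inE eqxx.
by rewrite (dist_adj yu eyu) (dist_adj (_ : v != u)) 1?eq_sym // sym.
Qed.

Theorem proposition3 (T : finType) (e : rel T) (u v : T) :
  simple_graph e -> connected_graph e -> 3 <= #|T| ->
  u != v -> wt_metric_basis e [set u; v] -> ~~ e u v.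
Proof.
move=> [sym _] conn T3 nuv [W_wtr _]; apply/negP=> euv.
have [x xW] := exists_notin_set2 u v T3.
have uW : u \in [set u; v] by rewrite !inE eqxx.
have [y [z [yW + eyz]]] := connect_boundary_edge (conn x u) xW uW.
rewrite !inE => /orP[] /eqP zE; subst z.
- by move/negP: (wtr_set2_adj_no_neighbour sym W_wtr nuv euv yW).
- rewrite setUC in W_wtr yW.
  have nvu : v != u by rewrite eq_sym.
  have evu : e v u by rewrite sym.
  by move/negP: (wtr_set2_adj_no_neighbour sym W_wtr nvu evu yW).
Qed.
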